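(* Let $\epsilon_1,\epsilon_2>0$ and let $F$ be an SCF on $n$ voters and three alternatives such that: (i) $M^{a,b}(F)\le\epsilon_1$ for every pair of distinct alternatives $a,b$; (ii) $F$ is at least $\epsilon_2$-far from every dictatorship and from every anti-dictatorship; (iii) $\Pr_{x\in(L_3)^n}[F(x)=a]\ge\epsilon_2$ for every alternative $a$. Then there exists a GSWF $G$ on $n$ voters and three alternatives such that: (1) $G$ satisfies IIA; (2) $\mathrm{Dist}(G,TR_3)\ge \epsilon_2-3\sqrt{\epsilon_1}$; (3) $NT(G)\le 3\sqrt{\epsilon_1}$.
   Context: $L_m$ is the set of linear orders on $m$ alternatives; profiles $x\in(L_m)^n$ are uniform random. For alternatives $a\ne b$, $x^{a,b}\in\{0,1\}^n$ has $x^{a,b}_i=1$ iff voter $i$ ranks $a$ above $b$. An SCF is $F:(L_m)^n\to\{$alternatives$\}$. $M^{a,b}(F)=\Pr[F(x)=a,\ F(x')=b]$ with $x,x'$ uniform profiles subject to $x^{a,b}=x'^{a,b}$. The $i$-th dictatorship (anti-dictatorship) SCF outputs the top (bottom) alternative of $x_i$; $F$ is $\delta$-far from it if $\Pr_x[F(x)\ne$ that output$]\ge\delta$. A GSWF is $G:(L_m)^n\to\{0,1\}^{\binom m2}$, giving for each pair $a,b$ a bit $G^{a,b}(x)$ ($=1$ iff society prefers $a$ to $b$, with $G^{b,a}=1-G^{a,b}$). $G$ satisfies IIA if each $G^{a,b}(x)$ depends only on $x^{a,b}$. $NT(G)=\Pr_x[G(x)$ is non-transitive$]$. $TR_m$ is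 the set of GSWFs on $m$ alternatives satisfying IIA whose output is always transitive, and $\mathrm{Dist}(G,TR_m)=\min_{H\in TR_m}\Pr_x[G(x)\ne H(x)]$. *)

From HB Require Import structures.
From mathcomp Require Import all_boot all_order all_algebra all_fingroup.
Set Implicit Arguments. Unset Strict Implicit. Unset Printing Implicit Defensive.
Import Order.TTheory GRing.Theory Num.Theory.
Local Open Scope ring_scope.

(* Alternatives: 'I_3.  A linear order on the alternatives is a permutation
   o : {perm 'I_3} mapping each alternative to its rank (0 = top). *)
Definition lorder := {perm 'I_3}.
Definition pref (o : lorder) (a b : 'I_3) : bool := (o a < o b)%N.
Definition topalt (o : lorder) : 'I_3 := (o^-1)%g ord0.
Definition botalt (o : lorder) : 'I_3 := (o^-1)%g ord_max.

Definition profile (n : nat) := {ffun 'I_n -> lorder}.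

Definition prob (R : numFieldType) (T : finType) (P : pred T) : R :=
  #|[set x | P x]|%:R / #|T|%:R.

Definition sameab n (a b : 'I_3) (x y : profile n) : bool :=
  [forall i, pref (x i) a b == pref (y i) a b].

Definition SCF n := profile n -> 'I_3.

Definition Mab (R : numFieldType) n (F : SCF n) (a b : 'I_3) : R :=
  #|[set p : profile n * profile n |
       [&& sameab a b p.1 p.2, F p.1 == a & F p.2 == b]]|%:R /
  #|[set p : profile n * profile n | sameab a b p.1 p.2]|%:R.

Definition far_from_dict (R : numFieldType) n (F : SCF n) (i : 'I_n) (d : R) :=
  d <= prob R (fun x : profile n => F x != topalt (x i)).
Definition far_from_antidict (R : numFieldType) n (F : SCF n) (i : 'I_n) (d : R) :=
  d <= prob R (fun x : profile n => F x != botalt (x i)).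

(* GSWF output: one bit for each unordered pair {a,b}, indexed by a < b;
   the bit is 1 iff society prefers a to b. *)
Definition upair := {p : 'I_3 * 'I_3 | (p.1 < p.2)%N}.
Definition gout := {ffun upair -> bool}.
Definition GSWF n := {ffun profile n -> gout}.

(* G^{a,b} read off the output (G^{b,a} = 1 - G^{a,b}); false on the diagonal. *)
Definition gbit (w : gout) (a b : 'I_3) : bool :=
  match insub (a, b) : option upair with
  | Some p => w p
  | None => match insub (b, a) : option upair with
            | Some p => ~~ w p
            | None => false
            end
  end.

Definition IIA n (G : GSWF n) : bool :=
  [forall a : 'I_3, forall b : 'I_3, (a != b) ==>
     [forall x : profile n, forall y : profile n,
        sameab a b x y ==> (gbit (G x) a b == gbit (G y) a b)]].

Definition transitive_out (w : gout) : bool :=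
  [forall a : 'I_3, forall b : 'I_3, forall c : 'I_3,
     [&& a != b, b != c & a != c] ==>
       (gbit w a b && gbit w b c ==> gbit w a c)].

Definition NT (R : numFieldType) n (G : GSWF n) : R :=
  prob R (fun x : profile n => ~~ transitive_out (G x)).

Definition inTR n (H : GSWF n) : bool :=
  IIA H && [forall x, transitive_out (H x)].

Definition gdist (R : numFieldType) n (G H : GSWF n) : R :=
  prob R (fun x : profile n => G x != H x).

(* Dist(G, TR_3) = min over H in TR_3 (nonempty: dictatorships);
   1 is the neutral value (all distances are <= 1). *)
Definition DistTR (R : realFieldType) n (G : GSWF n) : R :=
  \big[Order.min/1]_(H : GSWF n | inTR H) gdist R G H.

From HB Require Import structures.
From mathcomp Require Import all_boot all_order all_algebra all_fingroup.
From mathcomp Require Import ring lra.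
Set Implicit Arguments. Unset Strict Implicit. Unset Printing Implicit Defensive.
Import Order.TTheory GRing.Theory Num.Theory.

(* The witness is the majority GSWF: G^{a,b}(x) = 1 iff, among the profiles y
   with y^{a,b} = x^{a,b}, F outputs a at least as often as b.  It satisfies
   IIA by construction. *)

(* Boolean vectors u : BV n record, voter by voter, whether one fixed
   alternative is ranked above another. *)
Definition BV n := {ffun 'I_n -> bool}.
Definition bneg n (u : BV n) : BV n := [ffun i => ~~ u i].

(* u, v, w can be the (a,b), (b,c), (c,a) comparison vectors of a single
   profile exactly when no voter's triple is cyclic, i.e. constant. *)
Definition adm n (u v w : BV n) := forall i, ~~ [&& u i == v i & v i == w i].

Definition no_cycle n (f g h : BV n -> bool) :=
  forall u v w, adm u v w -> ~ (f u = g v /\ g v = h w).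

Definition nonconstant n (f : BV n -> bool) := (exists u, f u) /\ (exists u, ~~ f u).

Section Wilson.
Variable n : nat.
Implicit Types (u v w z p : BV n) (f g h : BV n -> bool).

Lemma bnegK u : bneg (bneg u) = u.
Proof. by apply/ffunP => i; rewrite !ffunE negbK. Qed.

(* Opposite vectors never agree, so they are admissible with anything. *)
Lemma adm_bneg u w : adm u (bneg u) w.
Proof. by move=> i; rewrite ffunE; case: (u i); case: (w i). Qed.

Lemma no_cycle_rot f g h : no_cycle f g h -> no_cycle g h f.
Proof.
move=> H u v w Huvw [E1 E2]; apply: (H w u v); last by split; rewrite E1 E2.
by move=> i; move: (Huvw i); case: (u i); case: (v i); case: (w i).
Qed.

Lemma no_cycle_bneg f g h : no_cycle f g h -> nonconstant h ->
  forall u, g (bneg u) = ~~ f u.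
Proof.
move=> H [[w1 hw1] [w0 hw0]] u.
case fu: (f u); case gu: (g (bneg u)) => //; exfalso.
- by apply: (H u (bneg u) w1 (adm_bneg u w1)); rewrite fu gu hw1.
- by apply: (H u (bneg u) w0 (adm_bneg u w0)); rewrite fu gu (negbTE hw0).
Qed.

Lemma no_cycle_collapse f g h : no_cycle f g h ->
  nonconstant f -> nonconstant g -> nonconstant h ->
  [/\ g =1 f, h =1 f & forall u, f (bneg u) = ~~ f u].
Proof.
move=> H ncf ncg nch.
have Hgh := no_cycle_rot H; have Hhf := no_cycle_rot Hgh.
have gf u : g (bneg u) = ~~ f u := no_cycle_bneg H nch u.
have hg v : h (bneg v) = ~~ g v := no_cycle_bneg Hgh ncf v.
have fh w : f (bneg w) = ~~ h w := no_cycle_bneg Hhf ncg w.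
have hf u : h u = f u by rewrite -{1}[u]bnegK hg gf negbK.
have gf' u : g u = f u by rewrite -{1}[u]bnegK gf fh negbK hf.
by split => // u; rewrite fh hf.
Qed.

Lemma self_dual_closed f : no_cycle f f f -> (forall u, f (bneg u) = ~~ f u) ->
  forall u v z, f u -> f v -> (forall j, u j = v j -> z j = u j) -> f z.
Proof.
move=> H dual u v z fu fv Hz; apply/negPn/negP => fz.
apply: (H u v (bneg z)); last by rewrite dual fu fv (negbTE fz).
move=> i; rewrite ffunE; case E: (u i == v i) => //=.
by rewrite (Hz i (eqP E)) -(eqP E); case: (u i).
Qed.

Section Dictator.
Variable f : BV n -> bool.
Hypothesis f_dual : forall u, f (bneg u) = ~~ f u.
Hypothesis f_closed :
  forall u v z, f u -> f v -> (forall j, u j = v j -> z j = u j) -> f z.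

Definition decisive (E : {set 'I_n}) p := forall z, {in E, forall j, z j = p j} -> f z.

Lemma decisive0 p : ~ decisive set0 p.
Proof.
move=> D; have fz z : f z by apply: D => j; rewrite in_set0.
by have := f_dual p; rewrite !fz.
Qed.

(* The key step: a decisive set either has a decisive voter i, or stays
   decisive without i.  The witnesses z1 and v agree exactly on i, while
   z2 and bneg v agree exactly on E :\ i. *)
Lemma decisive_split E p i : decisive E p -> i \in E ->
  decisive [set i] p \/ decisive (E :\ i) p.
Proof.
move=> D iE.
pose z1 : BV n := [ffun j => if j \in E then p j else false].
pose z2 : BV n := [ffun j => if j \in E then p j else true].
pose v : BV n := [ffun j => if j == i then p j else if j \in E then ~~ p j else true].
have fz1 : f z1 by apply: D => j jE; rewrite ffunE jE.
have fz2 : f z2 by apply: D => j jE; rewrite ffunE jE.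
have [fv|fv] := boolP (f v); [left|right] => z Hz.
- apply: (f_closed fz1 fv) => j; rewrite !ffunE; case: (eqVneq j i) => [->|ji].
    by rewrite iE => _; rewrite Hz ?in_set1.
  by case: (j \in E); case: (p j).
- have fnv : f (bneg v) by rewrite f_dual.
  apply: (f_closed fz2 fnv) => j; rewrite !ffunE; case: (eqVneq j i) => [->|ji].
    by rewrite iE; case: (p i).
  by case jE: (j \in E) => //= _; rewrite Hz // in_setD1 ji jE.
Qed.

Lemma decisive_voter E p : decisive E p -> exists i, decisive [set i] p.
Proof.
have [k ltEk] := ubnP #|E|; elim: k E p ltEk => // k IH E p ltEk D.
have [E0|[i iE]] := set_0Vmem E; first by subst; case: (decisive0 D).
case: (decisive_split D iE) => [Di|Di]; first by exists i.
by apply: (IH _ _ _ Di); move: ltEk; rewrite (cardsD1 i E) iE add1n ltnS.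
Qed.

Lemma closed_dictator p : f p -> exists i c, forall u, f u = (u i == c).
Proof.
move=> fp; have Dp : decisive [set: 'I_n] p.
  by move=> z Hz; suff -> : z = p by []; apply/ffunP => j; apply: Hz; rewrite in_setT.
have [i Di] := decisive_voter Dp.
exists i, (p i) => u; case: (eqVneq (u i) (p i)) => [E|E].
  by apply: Di => j; rewrite in_set1 => /eqP ->.
apply/negbTE; rewrite -f_dual; apply: Di => j; rewrite in_set1 => /eqP ->.
by rewrite ffunE; move: E; case: (u i); case: (p i).
Qed.

End Dictator.

Theorem wilson_cube f g h : no_cycle f g h ->
  nonconstant f -> nonconstant g -> nonconstant h ->
  exists i c, forall u, [/\ f u = (u i == c), g u = (u i == c) & h u = (u i == c)].
Proof.
move=> H ncf ncg nch; have [gf hf dual] := no_cycle_collapse H ncf ncg nch.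
have Hf : no_cycle f f f by move=> u v w a; rewrite -(gf v) -(hf w); exact: H.
have [[p fp] _] := ncf.
have [i [c Hic]] := closed_dictator dual (self_dual_closed Hf dual) fp.
by exists i, c => u; rewrite gf hf Hic.
Qed.

End Wilson.

Definition i0 : 'I_3 := @Ordinal 3 0 isT.
Definition i1 : 'I_3 := @Ordinal 3 1 isT.
Definition i2 : 'I_3 := @Ordinal 3 2 isT.

Lemma ord3P (P : 'I_3 -> Prop) : P i0 -> P i1 -> P i2 -> forall a, P a.
Proof.
move=> H0 H1 H2 [[|[|[|m]]] Hm]; last by [].
- by rewrite (_ : Ordinal Hm = i0) //; apply: val_inj.
- by rewrite (_ : Ordinal Hm = i1) //; apply: val_inj.
- by rewrite (_ : Ordinal Hm = i2) //; apply: val_inj.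
Qed.

Lemma three_cover (a b c t : 'I_3) :
  a != b -> b != c -> a != c -> [|| t == a, t == b | t == c].
Proof. by move: a b c t; do 4 apply: ord3P. Qed.

Lemma pref_anti (o : lorder) a b : a != b -> pref o b a = ~~ pref o a b.
Proof.
move=> ab; rewrite /pref -leqNgt ltn_neqAle.
case: eqP => //= E; have E2 : b = a by apply: (@perm_inj _ o); apply: val_inj.
by rewrite E2 eqxx in ab.
Qed.

Lemma pref_swap (o : lorder) a b : a != b -> pref (tperm a b * o)%g a b = ~~ pref o a b.
Proof. by move=> ab; rewrite -pref_anti // /pref !permM tpermL tpermR. Qed.

Lemma top_topalt (o : lorder) (t : 'I_3) : (forall b, b != t -> pref o t b) -> topalt o = t.
Proof.
move=> H; rewrite /topalt; case: (eqVneq ((o^-1)%g ord0) t) => // st.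
by have := H _ st; rewrite /pref permKV.
Qed.

Lemma top_botalt (o : lorder) (t : 'I_3) : (forall b, b != t -> pref o b t) -> botalt o = t.
Proof.
move=> H; rewrite /botalt; case: (eqVneq ((o^-1)%g ord_max) t) => // st.
have := H _ st; rewrite /pref permKV /=.
by case: (o t) => [[|[|[|m]]] Hm].
Qed.

(* A triple t = (x, y, z) of comparisons (i0 vs i1, i1 vs i2, i2 vs i0) is
   realized by a linear order iff it is not constant.  The realizing order
   ranks each alternative by the number of alternatives preferred to it. *)
Definition noncyclic (t : bool * bool * bool) :=
  let: (x, y, z) := t in ~~ [&& x == y & y == z].

Definition triple_rank (t : bool * bool * bool) (j : 'I_3) : nat :=
  let: (x, y, z) := t in
  if j == i0 then (~~ x) + z else if j == i1 then x + (~~ y) else y + (~~ z).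

Lemma triple_rank_lt t j : (triple_rank t j < 3)%N.
Proof.
rewrite /triple_rank; case: t => [[x y] z].
by case: ifP => _; last case: ifP => _; case: x; case: y; case: z.
Qed.

Definition triple_rankf t (j : 'I_3) : 'I_3 :=
  if noncyclic t then Ordinal (triple_rank_lt t j) else j.

Lemma triple_rankf_inj t : injective (triple_rankf t).
Proof.
rewrite /triple_rankf; case Hnc: (noncyclic t); last by [].
move=> x y; move: x y; apply: ord3P; apply: ord3P;
by move=> /(congr1 val) /=; rewrite /triple_rank /=; case: t Hnc => [[[] []] []].
Qed.

Definition order_of_triple t : lorder := perm (@triple_rankf_inj t).

Lemma order_of_tripleP t : noncyclic t ->
  [/\ pref (order_of_triple t) i0 i1 = t.1.1, pref (order_of_triple t) i1 i2 = t.1.2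
    & pref (order_of_triple t) i2 i0 = t.2].
Proof.
move=> Hnc; rewrite /pref !permE /triple_rankf Hnc /= /triple_rank /=.
by case: t Hnc => [[[] []] []].
Qed.

Definition Xab n (a b : 'I_3) (x : profile n) : BV n := [ffun i => pref (x i) a b].
Definition profile_of n (u v w : BV n) : profile n :=
  [ffun i => order_of_triple (u i, v i, w i)].

Lemma profile_ofP n (u v w : BV n) : adm u v w ->
  [/\ Xab i0 i1 (profile_of u v w) = u, Xab i1 i2 (profile_of u v w) = v
    & Xab i2 i0 (profile_of u v w) = w].
Proof.
move=> Hadm; have Hs i := @order_of_tripleP (u i, v i, w i) (Hadm i).
by split; apply/ffunP => i; rewrite !ffunE; case: (Hs i).
Qed.

Lemma gbit_lt (w : gout) (a b : 'I_3) (h : (a < b)%N) : gbit w a b = w (Sub (a, b) h).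
Proof. by rewrite /gbit insubT. Qed.

Lemma gbit_gt (w : gout) (a b : 'I_3) (h : (a < b)%N) : gbit w b a = ~~ w (Sub (a, b) h).
Proof. by rewrite /gbit insubF ?insubT //=; apply/negbTE; rewrite -leqNgt ltnW. Qed.

Lemma gbit_anti (w : gout) (a b : 'I_3) : a != b -> gbit w b a = ~~ gbit w a b.
Proof.
move=> ab; case: (ltngtP a b) => h.
- by rewrite (gbit_gt w h) (gbit_lt w h).
- by rewrite (gbit_gt w h) (gbit_lt w h) negbK.
- by move: ab; rewrite (val_inj h) eqxx.
Qed.

Lemma gbit_cyclic (w : gout) (o : lorder) (fl : bool) :
  gbit w i0 i1 = pref o i0 i1 (+) fl ->
  gbit w i1 i2 = pref o i1 i2 (+) fl ->
  gbit w i2 i0 = pref o i2 i0 (+) fl ->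
  forall a b : 'I_3, a != b -> gbit w a b = pref o a b (+) fl.
Proof.
move=> E01 E12 E20.
have a01 : i0 != i1 by []. have a12 : i1 != i2 by []. have a20 : i2 != i0 by [].
apply: ord3P; apply: ord3P => // _;
  first [ by rewrite (gbit_anti _ a01) (pref_anti _ a01) E01 addNb
        | by rewrite (gbit_anti _ a20) (pref_anti _ a20) E20 addNb
        | by rewrite (gbit_anti _ a12) (pref_anti _ a12) E12 addNb ].
Qed.

Definition is_top (w : gout) (c : 'I_3) : bool := [forall b, (b != c) ==> gbit w c b].

Lemma is_topE (w : gout) c b : is_top w c -> b != c -> gbit w c b.
Proof. by move=> /forallP /(_ b) /implyP. Qed.

Lemma top_trans (w : gout) (t : 'I_3) : is_top w t -> transitive_out w.
Proof.
move=> Ht; apply/forallP => a; apply/forallP => b; apply/forallP => c.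
apply/implyP => /and3P [ab bc ac]; apply/implyP => /andP [hab hbc].
case/or3P: (three_cover t ab bc ac) => /eqP E; subst t.
- by apply: is_topE; rewrite // eq_sym.
- have ba : b != a by rewrite eq_sym.
  by move: hab; rewrite (gbit_anti _ ba) is_topE.
- have cb : c != b by rewrite eq_sym.
  by move: hbc; rewrite (gbit_anti _ cb) is_topE.
Qed.

Lemma trans_no_cycle (w : gout) : transitive_out w ->
  ~ (gbit w i0 i1 = gbit w i1 i2 /\ gbit w i1 i2 = gbit w i2 i0).
Proof.
move=> /forallP T [E1 E2].
have a01 : i0 != i1 by []. have a12 : i1 != i2 by []. have a20 : i2 != i0 by [].
case H: (gbit w i0 i1).
- move: (T i0) => /forallP /(_ i1) /forallP /(_ i2) /implyP /(_ isT) /implyP.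
  by rewrite H -E1 H (gbit_anti _ a20) -E2 -E1 H => /(_ isT).
- move: (T i2) => /forallP /(_ i1) /forallP /(_ i0) /implyP /(_ isT) /implyP.
  by rewrite (gbit_anti _ a12) (gbit_anti _ a01) -E1 H -E2 -E1 H => /(_ isT).
Qed.

Section Classes.
Variable n : nat.
Implicit Types (x y : profile n) (a b c : 'I_3).

Lemma card_set_sum (T : finType) (A : {set T}) : #|A| = \sum_x (x \in A : nat).
Proof. by rewrite -sum1_card big_mkcond. Qed.

Lemma sameab_refl a b x : sameab a b x x.
Proof. by apply/forallP. Qed.

Lemma sameab_sym a b x y : sameab a b x y = sameab a b y x.
Proof. by apply/forallP/forallP => H i; rewrite eq_sym H. Qed.

Lemma sameab_trans a b x x' y : sameab a b x x' -> sameab a b x y = sameab a b x' y.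
Proof.
move=> /forallP H; apply/forallP/forallP => H2 i.
  by rewrite -(eqP (H i)) H2.
by rewrite (eqP (H i)) H2.
Qed.

Lemma sameab_swap a b x y : a != b -> sameab b a x y = sameab a b x y.
Proof.
move=> ab; apply/forallP/forallP => H i; move: (H i);
rewrite (pref_anti (x i) ab) (pref_anti (y i) ab);
by case: (pref (x i) a b); case: (pref (y i) a b).
Qed.

Lemma sameab_Xab a b x y : Xab a b x = Xab a b y -> sameab a b x y.
Proof. by move/ffunP => E; apply/forallP => i; move: (E i); rewrite !ffunE => ->. Qed.

Definition ab_class a b x := [set y | sameab a b x y].

(* All classes have the same size: swapping a and b in the voters where x
   and x' disagree maps one class bijectively onto the other. *)
Lemma ab_class_card a b x x' : a != b -> #|ab_class a b x| = #|ab_class a b x'|.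
Proof.
move=> ab.
pose phi y : profile n :=
  [ffun i => if pref (x i) a b == pref (x' i) a b then y i else (tperm a b * y i)%g].
have phiK : cancel phi phi.
  move=> y; apply/ffunP => i; rewrite ffunE; case E: (_ == _); rewrite ffunE E //.
  by rewrite mulgA tperm2 mul1g.
rewrite !card_set_sum (reindex_inj (can_inj phiK)); apply: eq_bigr => y _.
rewrite !inE; congr nat_of_bool; apply/forallP/forallP => Hy i; move: (Hy i).
all: rewrite ffunE; case: ifP => [/eqP E|E]; rewrite ?pref_swap // ?E //.
all: by move: E; case: (pref (x i) a b); case: (pref (x' i) a b); case: (pref (y i) a b).
Qed.

Lemma ab_class_gt0 a b x : (0 < #|ab_class a b x|)%N.
Proof. by apply/card_gt0P; exists x; rewrite inE sameab_refl. Qed.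

Variable F : SCF n.

Definition class_count a b x c := #|[set y | sameab a b x y && (F y == c)]|.

Lemma class_count_inv a b x x' c :
  sameab a b x x' -> class_count a b x c = class_count a b x' c.
Proof. by move=> H; apply: eq_card => y; rewrite !inE (sameab_trans y H). Qed.

Lemma sum_class_count a b c (phi : profile n -> nat) x0 : a != b ->
  (forall x y, sameab a b x y -> phi x = phi y) ->
  \sum_x class_count a b x c * phi x = #|ab_class a b x0| * \sum_x (F x == c) * phi x.
Proof.
move=> ab Hphi.
rewrite /class_count; under eq_bigr => x _ do rewrite card_set_sum big_distrl /=.
rewrite exchange_big /= big_distrr /=; apply: eq_bigr => y _.
rewrite (ab_class_card x0 y ab) card_set_sum big_distrl.
apply: eq_bigr => x _; rewrite !inE sameab_sym.
by case: (boolP (sameab a b y x)) => // H; rewrite (Hphi x y) 1?sameab_sym //= mul1n.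
Qed.

Lemma Mab_num a b :
  #|[set p : profile n * profile n | [&& sameab a b p.1 p.2, F p.1 == a & F p.2 == b]]|
  = \sum_x (F x == a) * class_count a b x b.
Proof.
rewrite card_set_sum.
have -> : \sum_x (F x == a) * class_count a b x b =
   \sum_x \sum_y ((sameab a b x y) && (F x == a) && (F y == b) : nat).
  apply: eq_bigr => x _; rewrite /class_count card_set_sum big_distrr /=.
  apply: eq_bigr => y _; rewrite inE.
  by case: (sameab a b x y); case: (F x == a); case: (F y == b).
rewrite pair_big /=; apply: eq_bigr => [[x y]] _; rewrite inE /=.
by case: (sameab a b x y); case: (F x == a); case: (F y == b).
Qed.

Lemma Mab_den a b x0 : a != b ->
  #|[set p : profile n * profile n | sameab a b p.1 p.2]| =
  #|profile n| * #|ab_class a b x0|.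
Proof.
move=> ab; rewrite card_set_sum.
have -> : #|profile n| * #|ab_class a b x0| =
    \sum_(x : profile n) \sum_(y : profile n) (sameab a b x y : nat).
  rewrite cardT -cardE -sum_nat_const; apply: eq_bigr => x _.
  by rewrite (ab_class_card x0 x ab) card_set_sum; apply: eq_bigr => y _; rewrite inE.
by rewrite pair_big /=; apply: eq_bigr => [[x y]] _; rewrite inE.
Qed.

End Classes.

Definition majority n (F : SCF n) : GSWF n :=
  [ffun x => [ffun p : upair =>
     (class_count F (val p).1 (val p).2 x (val p).2 <=
      class_count F (val p).1 (val p).2 x (val p).1)%N]].

Definition minority n (F : SCF n) a b (x : profile n) : bool :=
  ((F x == b) && (class_count F a b x b <= class_count F a b x a)%N) ||
  ((F x == a) && (class_count F a b x a < class_count F a b x b)%N).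

Section Majority.
Variables (n : nat) (F : SCF n).
Implicit Types (x y : profile n) (a b c : 'I_3).

Lemma majorityE x a b : (a < b)%N ->
  gbit (majority F x) a b = (class_count F a b x b <= class_count F a b x a)%N.
Proof. by move=> h; rewrite (gbit_lt _ h) !ffunE. Qed.

Lemma majority_IIA : IIA (majority F).
Proof.
apply/forallP => a; apply/forallP => b; apply/implyP => ab.
apply/forallP => x; apply/forallP => y; apply/implyP => Hxy.
case: (ltngtP a b) => h.
- by rewrite !majorityE // !(class_count_inv F _ Hxy).
- have ba : b != a by rewrite eq_sym.
  rewrite !(gbit_anti _ ba) !majorityE //.
  by rewrite -(sameab_swap _ _ ab) in Hxy; rewrite !(class_count_inv F _ Hxy).
- by move: ab; rewrite (val_inj h) eqxx.
Qed.

Lemma not_top_minority x : ~~ is_top (majority F x) (F x) ->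
  exists a b, (a < b)%N /\ minority F a b x.
Proof.
move=> /forallPn [s]; rewrite negb_imply => /andP [st ng].
case: (ltngtP (F x) s) => h.
- exists (F x), s; split => //; rewrite /minority eqxx /=; apply/orP; right.
  by move: ng; rewrite majorityE // -ltnNge.
- exists s, (F x); split => //; rewrite /minority eqxx /=; apply/orP; left.
  by move: ng; rewrite (gbit_anti _ st) majorityE // negbK.
- by move: st; rewrite (val_inj h) eqxx.
Qed.

(* Each class contributes, per member, the smaller of its two counts. *)
Lemma minority_card a b x0 : a != b ->
  #|ab_class a b x0| * #|[set x | minority F a b x]| =
  \sum_x minn (class_count F a b x a) (class_count F a b x b).
Proof.
move=> ab; rewrite (card_set_sum [set x | minority F a b x]).
pose phi1 x : nat := (class_count F a b x b <= class_count F a b x a)%N.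
pose phi2 x : nat := (class_count F a b x a < class_count F a b x b)%N.
under eq_bigr => x _ do rewrite inE.
have -> : \sum_x (minority F a b x : nat) =
   \sum_x (F x == b) * phi1 x + \sum_x (F x == a) * phi2 x.
  rewrite -big_split; apply: eq_bigr => x _; rewrite /minority /phi1 /phi2.
  case: (eqVneq (F x) b) => Eb; case: (eqVneq (F x) a) => Ea //=.
  - by move: ab; rewrite -Ea Eb eqxx.
  - by rewrite ?orbF ?mul1n ?mul0n ?addn0 ?add0n.
  - by rewrite ?orbF ?mul1n ?mul0n ?addn0 ?add0n.
have inv1 x y : sameab a b x y -> phi1 x = phi1 y.
  by move=> H; rewrite /phi1 !(class_count_inv F _ H).
have inv2 x y : sameab a b x y -> phi2 x = phi2 y.
  by move=> H; rewrite /phi2 !(class_count_inv F _ H).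
rewrite mulnDr -(sum_class_count F b x0 ab inv1) -(sum_class_count F a x0 ab inv2).
rewrite -big_split; apply: eq_bigr => x _; rewrite /phi1 /phi2 /minn.
by case: ltnP => H /=; rewrite ?muln0 ?muln1 ?addn0 ?add0n.
Qed.

Lemma sum_sq_le (T : finType) (m : T -> nat) :
  (\sum_x m x) ^ 2 <= #|T| * \sum_x (m x) ^ 2.
Proof.
rewrite -(leq_pmul2l (isT : 0 < 2)).
have -> : 2 * (\sum_x m x) ^ 2 = \sum_x \sum_y 2 * (m x * m y).
  rewrite -mulnn big_distrl big_distrr /=; apply: eq_bigr => x _.
  by rewrite big_distrr /= big_distrr /=; apply: eq_bigr => y _; rewrite mulnA.
have -> : 2 * (#|T| * \sum_x m x ^ 2) = \sum_x \sum_y (m x ^ 2 + m y ^ 2).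
  apply/esym; under eq_bigr => x _ do rewrite big_split /=.
  by rewrite big_split /= [X in X + _]exchange_big /= sum_nat_const addnn -mul2n cardT -cardE.
apply: leq_sum => x _; apply: leq_sum => y _; exact: (nat_Cauchy _ _).1.
Qed.

(* The minority count is controlled by the number of (a,b)-discordant pairs:
   bound min(p, q)^2 by p * q class by class and apply Cauchy-Schwarz. *)
Lemma minority_card_sq a b x0 : a != b ->
  #|ab_class a b x0| * #|[set x | minority F a b x]| ^ 2 <=
  #|profile n| *
  #|[set p : profile n * profile n | [&& sameab a b p.1 p.2, F p.1 == a & F p.2 == b]]|.
Proof.
move=> ab; have cpos := ab_class_gt0 a b x0.
rewrite -(leq_pmul2l cpos) mulnA mulnn -expnMn minority_card //.
apply: (leq_trans (sum_sq_le _)); rewrite mulnCA leq_pmul2l; last by apply/card_gt0P; exists x0.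
rewrite Mab_num -(@sum_class_count n F a b a (fun x => class_count F a b x b) x0 ab);
  last by move=> x y H; apply: class_count_inv.
apply: leq_sum => x _; rewrite -mulnn; apply: leq_mul; [exact: geq_minl | exact: geq_minr].
Qed.

End Majority.

Section TransitiveIIA.
Variables (n : nat) (H : GSWF n).
Hypothesis H_TR : inTR H.

Lemma TR_trans x : transitive_out (H x).
Proof. by case/andP: H_TR => _ /forallP. Qed.

Lemma TR_Xab a b x y : a != b -> Xab a b x = Xab a b y -> gbit (H x) a b = gbit (H y) a b.
Proof.
move=> ab /sameab_Xab Hxy; case/andP: H_TR => + _.
by move=> /forallP /(_ a) /forallP /(_ b) /implyP /(_ ab) /forallP /(_ x) /forallP /(_ y)
          /implyP /(_ Hxy) /eqP.
Qed.

(* By IIA, each bit of H is a function of one comparison vector; we read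
   these pairwise rules off admissible profiles. *)
Definition rule01 (u : BV n) := gbit (H (profile_of u (bneg u) u)) i0 i1.
Definition rule12 (v : BV n) := gbit (H (profile_of (bneg v) v v)) i1 i2.
Definition rule20 (w : BV n) := gbit (H (profile_of (bneg w) (bneg w) w)) i2 i0.

Lemma rule01E x : gbit (H x) i0 i1 = rule01 (Xab i0 i1 x).
Proof. by have [E _ _] := profile_ofP (adm_bneg (Xab i0 i1 x) (Xab i0 i1 x)); apply: TR_Xab. Qed.

Lemma rule12E x : gbit (H x) i1 i2 = rule12 (Xab i1 i2 x).
Proof.
have Ha : adm (bneg (Xab i1 i2 x)) (Xab i1 i2 x) (Xab i1 i2 x).
  by move=> i; rewrite !ffunE; case: (pref _ _ _).
by have [_ E _] := profile_ofP Ha; apply: TR_Xab.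
Qed.

Lemma rule20E x : gbit (H x) i2 i0 = rule20 (Xab i2 i0 x).
Proof.
have Ha : adm (bneg (Xab i2 i0 x)) (bneg (Xab i2 i0 x)) (Xab i2 i0 x).
  by move=> i; rewrite !ffunE; case: (pref _ _ _).
by have [_ _ E] := profile_ofP Ha; apply: TR_Xab.
Qed.

(* Transitivity of H on realized profiles forbids cycles of the rules. *)
Lemma rules_no_cycle : no_cycle rule01 rule12 rule20.
Proof.
move=> u v w Huvw; have [E1 E2 E3] := profile_ofP Huvw.
by have := trans_no_cycle (TR_trans (profile_of u v w)); rewrite rule01E rule12E rule20E E1 E2 E3.
Qed.

Lemma rule_nonconstant a b (r : BV n -> bool) : a != b ->
  (forall x, gbit (H x) a b = r (Xab a b x)) ->
  (exists x, is_top (H x) a) -> (exists x, is_top (H x) b) -> nonconstant r.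
Proof.
move=> ab rE [xa Ta] [xb Tb]; split.
  by exists (Xab a b xa); rewrite -rE is_topE // eq_sym.
by exists (Xab a b xb); rewrite -rE -(gbit_anti _ ab); exact: is_topE Tb ab.
Qed.

Lemma TR_classify :
  (exists c, forall x, ~~ is_top (H x) c) \/
  (exists i, forall x a b, a != b -> gbit (H x) a b = pref (x i) a b) \/
  (exists i, forall x a b, a != b -> gbit (H x) a b = pref (x i) b a).
Proof.
case: (boolP [exists c, [forall x, ~~ is_top (H x) c]]) => [/existsP [c /forallP Hc]|Hn].
  by left; exists c.
right; have Htop c : exists x, is_top (H x) c.
  by move: Hn; rewrite negb_exists => /forallP /(_ c) /forallPn [x]; rewrite negbK; exists x.
have [i [c Hic]] := wilson_cube rules_no_cycle
  (rule_nonconstant (isT : i0 != i1) rule01E (Htop _) (Htop _))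
  (rule_nonconstant (isT : i1 != i2) rule12E (Htop _) (Htop _))
  (rule_nonconstant (isT : i2 != i0) rule20E (Htop _) (Htop _)).
have Hb x : forall a b, a != b -> gbit (H x) a b = pref (x i) a b (+) ~~ c.
  apply: gbit_cyclic; [rewrite rule01E; case: (Hic (Xab i0 i1 x)) => -> _ _
    | rewrite rule12E; case: (Hic (Xab i1 i2 x)) => _ -> _
    | rewrite rule20E; case: (Hic (Xab i2 i0 x)) => _ _ ->];
  by rewrite ffunE; case: (pref _ _ _); case: (c).
clear Hic; move: Hb; case: c => /= Hb; [left|right]; exists i => x a b ab; rewrite Hb //.
  by rewrite addbF.
by rewrite addbT -pref_anti.
Qed.

End TransitiveIIA.

Local Open Scope ring_scope.

Section Probability.
Variable R : numFieldType.

Lemma prob_mono (T : finType) (P Q : pred T) :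
  (forall x, P x -> Q x) -> prob R P <= prob R Q.
Proof.
move=> H; rewrite /prob ler_wpM2r ?invr_ge0 ?ler0n // ler_nat.
by apply: subset_leq_card; apply/subsetP => x; rewrite !inE; exact: H.
Qed.

Lemma prob_le1 (T : finType) (P : pred T) : prob R P <= 1.
Proof.
rewrite /prob; case: (posnP #|T|) => [->|Np]; first by rewrite invr0 mulr0 ler01.
by rewrite ler_pdivrMr ?ltr0n // mul1r ler_nat max_card.
Qed.

Lemma prob_union2 (T : finType) (P Q1 Q2 : pred T) :
  (forall x, P x -> Q1 x || Q2 x) -> prob R P <= prob R Q1 + prob R Q2.
Proof.
move=> H; rewrite /prob -mulrDl -natrD ler_wpM2r ?invr_ge0 ?ler0n // ler_nat.
rewrite !card_set_sum -big_split /=; apply: leq_sum => x _; rewrite !inE.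
by move: (H x); case: (P x); case: (Q1 x); case: (Q2 x) => // /(_ isT).
Qed.

Lemma prob_union3 (T : finType) (P Q1 Q2 Q3 : pred T) :
  (forall x, P x -> [|| Q1 x, Q2 x | Q3 x]) ->
  prob R P <= prob R Q1 + prob R Q2 + prob R Q3.
Proof.
move=> H; apply: le_trans (prob_union2 (Q2 := Q3) (Q1 := predU Q1 Q2) _) _.
  by move=> x /H /=; rewrite orbA.
by rewrite lerD2r; apply: prob_union2.
Qed.

Lemma prob_le_gdist n (G H : GSWF n) (E B : pred (profile n)) :
  (forall x, E x -> G x = H x -> B x) -> prob R E <= gdist R G H + prob R B.
Proof.
move=> HEB; apply: prob_union2 => x Ex.
by case: (eqVneq (G x) (H x)) => [GH|//]; rewrite (HEB x Ex GH) orbT.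
Qed.

End Probability.

Lemma le_sqrt_of_sq (R : rcfType) (x y : R) : 0 <= x -> x ^+ 2 <= y -> x <= Num.sqrt y.
Proof. by move=> x0 H; rewrite -(ger0_norm x0) -sqrtr_sqr; exact: ler_wsqrtr. Qed.

Lemma minority_bound (R : rcfType) n (F : SCF n) a b : a != b ->
  prob R (minority F a b) <= Num.sqrt (Mab R F a b).
Proof.
move=> ab; set x0 : profile n := [ffun _ => 1%g].
have Hn := minority_card_sq F x0 ab.
rewrite /Mab (Mab_den x0 ab) /prob.
move: Hn; set c := #|ab_class a b _|; set B := #|[set x | minority F a b x]|;
  set N := #|profile n|; set P := #|[set p | _ ]| => Hn.
have cR : (c%:R : R) != 0 by rewrite pnatr_eq0 -lt0n ab_class_gt0.
have NR : (N%:R : R) != 0 by rewrite pnatr_eq0 -lt0n; apply/card_gt0P; exists x0.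
apply: le_sqrt_of_sq; first by rewrite divr_ge0 ?ler0n.
have -> : (B%:R / N%:R) ^+ 2 = (c * B ^ 2)%N%:R / (N ^ 2 * c)%N%:R :> R.
  by rewrite !natrM; field; rewrite cR NR.
have -> : P%:R / (N * c)%N%:R = (N * P)%N%:R / (N ^ 2 * c)%N%:R :> R.
  by rewrite !natrM; field; rewrite cR NR.
by rewrite ler_wpM2r ?invr_ge0 ?ler0n // ler_nat.
Qed.

Section MajorityBounds.
Variables (R : rcfType) (n : nat) (F : SCF n).

Definition off_top (x : profile n) : bool := ~~ is_top (majority F x) (F x).

Lemma off_top_bound (eps1 : R) : (forall a b, a != b -> Mab R F a b <= eps1) ->
  prob R off_top <= 3%:R * Num.sqrt eps1.
Proof.
move=> HM.
have Hmin a b : a != b -> prob R (minority F a b) <= Num.sqrt eps1.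
  by move=> ab; apply: le_trans (minority_bound R F ab) (ler_wsqrtr (HM a b ab)).
have H3 : prob R off_top <= prob R (minority F i0 i1) +
    prob R (minority F i0 i2) + prob R (minority F i1 i2).
  apply: prob_union3 => x /not_top_minority [a [b [ab Hab]]]; move: a b ab Hab.
  by do 2 apply: ord3P; move=> //= _ ->; rewrite ?orbT.
have := Hmin i0 i1 isT; have := Hmin i0 i2 isT; have := Hmin i1 i2 isT; lra.
Qed.

(* Every member of TR_3 is eps2-far from the majority GSWF, up to the
   off-top probability: each of the three kinds of member of TR_3 yields an
   event of probability >= eps2 on which agreement forces F(x) off top. *)
Lemma TR_far (eps2 : R) H : inTR H ->
  (forall i, far_from_dict F i eps2 /\ far_from_antidict F i eps2) ->
  (forall a, eps2 <= prob R (fun x : profile n => F x == a)) ->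
  eps2 <= gdist R (majority F) H + prob R off_top.
Proof.
move=> HTR Hfar Hpr; case: (TR_classify HTR) => [[c Hc]|[[i Hi]|[i Hi]]].
- apply: le_trans (Hpr c) _; apply: prob_le_gdist => x /eqP Fc GH.
  by rewrite /off_top GH Fc Hc.
- apply: le_trans (Hfar i).1 _; apply: prob_le_gdist => x Fx GH; apply: contra Fx.
  rewrite /off_top GH => Tx; apply/eqP/esym/top_topalt => b bt.
  by rewrite -Hi ?(is_topE Tx bt) // eq_sym.
- apply: le_trans (Hfar i).2 _; apply: prob_le_gdist => x Fx GH; apply: contra Fx.
  rewrite /off_top GH => Tx; apply/eqP/esym/top_botalt => b bt.
  by rewrite -Hi ?(is_topE Tx bt) // eq_sym.
Qed.

End MajorityBounds.

Theorem lemma4p3 (R : rcfType) (n : nat) (eps1 eps2 : R) (F : SCF n) :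
  0 < eps1 -> 0 < eps2 ->
  (forall a b : 'I_3, a != b -> Mab R F a b <= eps1) ->
  (forall i : 'I_n, far_from_dict F i eps2 /\ far_from_antidict F i eps2) ->
  (forall a : 'I_3, eps2 <= prob R (fun x : profile n => F x == a)) ->
  exists G : GSWF n,
    [/\ IIA G,
        eps2 - 3%:R * Num.sqrt eps1 <= DistTR R G
      & NT R G <= 3%:R * Num.sqrt eps1].
Proof.
move=> _ _ HM Hfar Hpr; have Hoff := off_top_bound HM.
exists (majority F); split.
- exact: majority_IIA.
- apply: le_bigmin => [|H HTR]; last by have := TR_far HTR Hfar Hpr; lra.
  have := Hpr i0; have := prob_le1 R (fun x : profile n => F x == i0).
  have := sqrtr_ge0 eps1; lra.
- apply: le_trans Hoff; apply: prob_mono => x; apply: contra; exact: top_trans.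
Qed.
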